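(* Let $a,b\in\mathbb{R}$ and let $n$ be a non-negative integer. Let $L^{a,b}_n=(d^{(n)}_{i,j})_{i,j\in\mathbb{N}}$ be the infinite lower triangular matrix with $d^{(n)}_{i,j}=a+jb$ if $i-j=n$ and $d^{(n)}_{i,j}=0$ otherwise. Then $L^{a,b}_n=L(ax^n,bx^n)$ belongs to the Lie algebra $\mathcal{L}(\mathcal{R}(\mathbb{R}))$ of the Riordan group, and for every $t\in\mathbb{R}$ the matrix $e^{tL^{a,b}_n}$ is the Riordan matrix $$e^{tL^{a,b}_n}=\begin{cases} T\!\left((1-bntx^n)^{\frac{b-a}{nb}}\ \middle|\ (1-bntx^n)^{\frac1n}\right) & \text{if } b\neq 0 \text{ (and } n\ge 1),\\[4pt] T\!\left(e^{atx^n}\ \middle|\ 1\right) & \text{if } b=0.\end{cases}$$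
   Context: All formal power series are in $\mathbb{R}[[x]]$. For $f,g\in\mathbb{R}[[x]]$ with $f(0)\neq0$, $g(0)\neq 0$, the Riordan matrix $T(f\mid g)=(d_{i,j})_{i,j\ge0}$ is the infinite lower triangular matrix with $d_{i,j}=[x^i]\dfrac{x^jf(x)}{g(x)^{j+1}}$ (the generating function of column $j$ is $x^jf/g^{j+1}$). The Riordan group $\mathcal{R}(\mathbb{R})$ is the set of all such matrices under matrix multiplication. For $\chi(x)=\sum\chi_kx^k$, $\alpha(x)=\sum\alpha_kx^k\in\mathbb{R}[[x]]$, $L(\chi,\alpha)$ denotes the infinite lower triangular matrix with entries $\ell_{i,j}=\chi_{i-j}+j\,\alpha_{i-j}$ for $i\ge j$ and $0$ for $i<j$; the Lie algebra of the Riordan group is $\mathcal{L}(\mathcal{R}(\mathbb{R}))=\{L(\chi,\alpha):\chi,\alpha\in\mathbb{R}[[x]]\}$. For an infinite lower triangular matrix $L$, $e^{tL}$ is the infinite lower triangular matrix whose leading $(m+1)\times(m+1)$ block equals the usual matrix exponential of the leading $(m+1)\times(m+1)$ block of $tL$, for every $m$. For $c\in\mathbb{R}$ and a real constant $s$, $(1-sx^n)^c$ denotes the formal power series $\sum_{k\ge0}\binom{c}{k}(-s)^kx^{nk}$ with generalized binomial coefficients. *)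

From HB Require Import structures.
From mathcomp Require Import all_boot all_order all_algebra.
From mathcomp Require Import all_classical all_reals all_analysis.
Set Implicit Arguments. Unset Strict Implicit. Unset Printing Implicit Defensive.
Import Order.TTheory GRing.Theory Num.Theory.
Local Open Scope ring_scope.

Section Defs.
Variable R : realType.

(* Formal power series in R[[x]] as coefficient sequences: f k = [x^k] f. *)
Definition fps := nat -> R.

Definition fps_one : fps := fun k => (k == 0%N)%:R.
Definition fps_mul (f g : fps) : fps :=
  fun k => \sum_(i < k.+1) f i * g (k - i)%N.
Definition fps_pow (f : fps) (m : nat) : fps := iter m (fps_mul f) fps_one.
Definition fps_Xpow (j : nat) : fps := fun k => (k == j)%:R.
Definition fps_monom (c : R) (n : nat) : fps := fun k => if k == n then c else 0.

(* First k+1 coefficients of the multiplicative inverse of g (g 0 <> 0):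
   h_0 = 1/g_0,  h_k = -(1/g_0) * sum_{i=1}^k g_i h_{k-i}. *)
Fixpoint fps_inv_upto (g : fps) (k : nat) : seq R :=
  match k with
  | 0 => [:: (g 0%N)^-1]
  | k'.+1 => let s := fps_inv_upto g k' in
      rcons s (- (g 0%N)^-1 * \sum_(i < k'.+1) g i.+1 * nth 0 s (k' - i)%N)
  end.
Definition fps_inv (g : fps) : fps := fun k => nth 0 (fps_inv_upto g k) k.

(* Riordan matrix T(f|g): d_{i,j} = [x^i] x^j f / g^{j+1}. *)
Definition riordan (f g : fps) (i j : nat) : R :=
  fps_mul (fps_mul (fps_Xpow j) f) (fps_inv (fps_pow g j.+1)) i.

Definition gbinom (c : R) (k : nat) : R :=
  (\prod_(i < k) (c - i%:R)) / (k`!)%:R.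

(* (1 - s x^n)^c := sum_k binom(c,k) (-s)^k x^{nk} *)
Definition fps_binom_pow (s : R) (n : nat) (c : R) : fps :=
  fun k => if n == 0%N then \sum_(l < k.+1) gbinom c l * (- s) ^+ l
           else if (n %| k)%N then gbinom c (k %/ n) * (- s) ^+ (k %/ n) else 0.
(* NB: the case n = 0 is never used in the statement. *)

(* e^{c x^n} := sum_k c^k/k! x^{nk}; for n = 0 this is the constant e^c. *)
Definition fps_expXn (c : R) (n : nat) : fps :=
  fun k => if n == 0%N then (if k == 0%N then expR c else 0)
           else if (n %| k)%N then c ^+ (k %/ n) / ((k %/ n)`!)%:R else 0.

Definition Lmat (chi alpha : fps) (i j : nat) : R :=
  if (j <= i)%N then chi (i - j)%N + j%:R * alpha (i - j)%N else 0.

Definition Labn (a b : R) (n : nat) (i j : nat) : R :=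
  if i == (j + n)%N then a + j%:R * b else 0.

Definition block (m : nat) (M : nat -> nat -> R) : 'M[R]_(m.+1) :=
  \matrix_(i < m.+1, j < m.+1) M i j.

Definition expmx (m : nat) (A : 'M[R]_(m.+1)) : 'M[R]_(m.+1) :=
  \matrix_(i, j) limn (fun N : nat => \sum_(k < N) (A ^+ k) i j / (k`!)%:R).

End Defs.

From HB Require Import structures.
From mathcomp Require Import all_boot all_order all_algebra.
From mathcomp Require Import all_classical all_reals all_analysis.
From mathcomp Require Import ring zify.
Import GRing.Theory Num.Theory numFieldNormedType.Exports.
Local Open Scope ring_scope.

(* Both sides are compared entrywise on every leading block.  On the matrix
   side, the k-th power of L^{a,b}_n maps e_j to
   prod_{l<k} (a + (j + n l) b) e_{j+nk}; hence for n > 0 only one power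
   contributes to each entry of the exponential series, which therefore
   stabilises (for n = b = 0 the matrix is scalar and the entry is e^{at}).
   On the Riordan side, the binomial series (1 - s x^n)^c satisfy
   (1 - s x^n)^c (1 - s x^n)^d = (1 - s x^n)^(c+d) (a substitution x |-> x^n
   in the Chu-Vandermonde identity), so x^j f / g^{j+1} is again such a
   series, with an explicit coefficient. *)

Lemma sum_single (V : nmodType) (m p : nat) (F : nat -> V) :
  (forall i : nat, i != p -> (i < m)%N -> F i = 0) ->
  \sum_(i < m) F i = if (p < m)%N then F p else 0.
Proof.
move=> Fp; rewrite -(big_ord1_eq +%R F p m) [RHS]big_mkcond /=; apply: eq_bigr => i _.
by case: eqP => // /eqP ip; rewrite Fp.
Qed.

Section FormalPowerSeries.
Variable R : realType.
Implicit Types (f g h : fps R).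

Lemma fps_mulr1 f : fps_mul f (@fps_one R) = f.
Proof.
apply/funext => k.
rewrite /fps_mul (@sum_single _ _ k (fun i => f i * @fps_one R (k - i)%N)) ?ltnSn.
  by rewrite /fps_one subnn eqxx mulr1.
move=> i ik ilt; rewrite /fps_one subn_eq0 leqNgt ltn_neqAle ik -ltnS ilt.
by rewrite mulr0.
Qed.

(* The recursion defining fps_inv is prefix-stable, so the k-th coefficient
   of fps_inv satisfies the usual recurrence for the inverse series. *)
Lemma size_fps_inv_upto g k : size (fps_inv_upto g k) = k.+1.
Proof. by elim: k => [|k IH] //=; rewrite size_rcons IH. Qed.

Lemma nth_fps_inv_upto g k i :
  (i <= k)%N -> nth 0 (fps_inv_upto g k) i = fps_inv g i.
Proof.
elim: k i => [|k IH] i; first by rewrite leqn0 => /eqP ->.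
rewrite leq_eqVlt => /orP [/eqP -> // | ik].
by rewrite /= nth_rcons size_fps_inv_upto ik; apply: IH; rewrite -ltnS.
Qed.

Lemma fps_invS g k :
  fps_inv g k.+1 = - (g 0%N)^-1 * \sum_(i < k.+1) g i.+1 * fps_inv g (k - i)%N.
Proof.
rewrite {1}/fps_inv /= nth_rcons size_fps_inv_upto ltnn eqxx; congr (_ * _).
by apply: eq_bigr => i _; rewrite nth_fps_inv_upto // leq_subr.
Qed.

Lemma fps_inv_unique g h :
  g 0%N != 0 -> fps_mul g h = @fps_one R -> fps_inv g = h.
Proof.
move=> g0 gh; apply/funext => k; elim: k {-2}k (leqnn k) => [|k IH] i.
  rewrite leqn0 => /eqP ->; have := congr1 (fun f => f 0%N) gh.
  rewrite /fps_mul /fps_one big_ord1 /= => e.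
  by rewrite /fps_inv /=; apply: (mulfI g0); rewrite divff // e.
rewrite leq_eqVlt => /orP [/eqP -> | ik]; last by apply: IH; rewrite -ltnS.
have := congr1 (fun f => f k.+1) gh.
rewrite /fps_mul /fps_one big_ord_recl /= subn0 mulr0n => /eqP.
rewrite addrC addr_eq0 => /eqP tail.
rewrite fps_invS (eq_bigr (fun l : 'I_k.+1 => g (bump 0 l) * h (k.+1 - bump 0 l)%N)).
  by rewrite tail mulrNN mulrA mulVf // mul1r.
by move=> l _; rewrite IH // leq_subr.
Qed.

Lemma fps_pow_one m : fps_pow (@fps_one R) m = @fps_one R.
Proof.
by elim: m => [|m IH] //; rewrite /fps_pow iterS -/(fps_pow _ m) IH fps_mulr1.
Qed.

Lemma fps_inv_one : fps_inv (@fps_one R) = @fps_one R.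
Proof. by apply: fps_inv_unique; rewrite ?fps_mulr1 // /fps_one oner_eq0. Qed.

Lemma fps_mulXpow j f k :
  fps_mul (@fps_Xpow R j) f k = if (j <= k)%N then f (k - j)%N else 0.
Proof.
rewrite /fps_mul (@sum_single _ _ j (fun i => @fps_Xpow R j i * f (k - i)%N)).
  by rewrite ltnS /fps_Xpow eqxx mul1r.
by move=> i ij _; rewrite /fps_Xpow (negbTE ij) mul0r.
Qed.

Lemma fps_mulXpowA j f h i :
  fps_mul (fps_mul (@fps_Xpow R j) f) h i =
  if (j <= i)%N then fps_mul f h (i - j)%N else 0.
Proof.
rewrite /fps_mul; under eq_bigr do rewrite -/(fps_mul _ _ _) fps_mulXpow.
case: ifP => ji; last first.
  rewrite big1 // => k _; have /negbTE -> : ~~ (j <= k)%N.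
    by rewrite -ltnNge; apply: leq_trans (ltn_ord k) _; rewrite ltnNge ji.
  by rewrite mul0r.
rewrite -(big_mkord xpredT
  (fun k => (if (j <= k)%N then f (k - j)%N else 0) * h (i - k)%N)).
rewrite (big_cat_nat (leq0n j) (leq_trans ji (leqnSn i))) /=.
rewrite big_nat_cond big1 ?add0r; last first.
  by move=> k /andP [/andP [_ kj] _]; rewrite leqNgt kj mul0r.
rewrite -{1}(add0n j) big_addn big_mkord subSn //.
by apply: eq_bigr => k _; rewrite leq_addl addnK; congr (_ * h _); lia.
Qed.

Lemma riordan_coef f g i j :
  riordan f g i j =
  if (j <= i)%N then fps_mul f (fps_inv (fps_pow g j.+1)) (i - j)%N else 0.
Proof. exact: fps_mulXpowA. Qed.

Lemma riordan_one f i j :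
  riordan f (@fps_one R) i j = if (j <= i)%N then f (i - j)%N else 0.
Proof. by rewrite riordan_coef fps_pow_one fps_inv_one fps_mulr1. Qed.

End FormalPowerSeries.

Lemma not_dvdn_between (n M i : nat) :
  (0 < n)%N -> (M * n < i)%N -> (i < M * n + n)%N -> ~~ (n %| i)%N.
Proof.
move=> n_gt0 lo hi; apply/negP => /dvdnP [q iq]; subst i.
have : (M < q)%N by rewrite -(ltn_pmul2r n_gt0).
have : (q < M.+1)%N by rewrite -(ltn_pmul2r n_gt0) mulSnr.
lia.
Qed.

Section SubstXn.
Variable R : realType.

Definition fps_subst_Xn (n : nat) (u : fps R) : fps R :=
  fun k => if (n %| k)%N then u (k %/ n)%N else 0.

Lemma sum_multiples (n M : nat) (F : nat -> R) : (0 < n)%N ->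
  \sum_(i < M * n + 1) (if (n %| i)%N then F (i %/ n)%N else 0) =
  \sum_(l < M.+1) F l.
Proof.
move=> n_gt0; elim: M => [|M IH]; first by rewrite mul0n !big_ord1 dvdn0 div0n.
rewrite big_ord_recr /= -IH.
rewrite -!(big_mkord xpredT (fun i => if (n %| i)%N then F (i %/ n)%N else 0)).
have -> : (M.+1 * n + 1 = (M * n + n).+1)%N by rewrite mulSnr; lia.
rewrite big_nat_recr /=; last by lia.
rewrite (big_cat_nat (n := (M * n + 1)%N)) /=; [|lia|lia].
rewrite [X in _ + X + _]big_nat_cond [X in _ + X + _]big1 ?addr0; last first.
  move=> i /andP [/andP [lo hi] _].
  by rewrite (negbTE (@not_dvdn_between n M i n_gt0 _ hi)) //; lia.
by rewrite -mulSnr dvdn_mull // mulnK.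
Qed.

Lemma fps_subst_Xn_mul (n : nat) (u v : fps R) : (0 < n)%N ->
  fps_mul (fps_subst_Xn n u) (fps_subst_Xn n v) = fps_subst_Xn n (fps_mul u v).
Proof.
move=> n_gt0; apply/funext => k; rewrite /fps_mul {3}/fps_subst_Xn.
case: ifP => nk; last first.
  rewrite big1 // => i _; rewrite /fps_subst_Xn.
  case: ifP => ni; last by rewrite mul0r.
  case: ifP => nki; last by rewrite mulr0.
  have : (n %| i + (k - i))%N by rewrite dvdn_addr.
  by rewrite subnKC ?nk // -ltnS ltn_ord.
have kK : k = ((k %/ n) * n)%N by rewrite divnK.
set K := (k %/ n)%N in kK *.
rewrite -(@sum_multiples n K (fun l => u l * v (K - l)%N) n_gt0) kK addn1.
apply: eq_bigr => i _; rewrite /fps_subst_Xn.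
case: ifP => ni; last by rewrite mul0r.
have iq : (i : nat) = ((i %/ n) * n)%N by rewrite divnK.
have le_iK : (i %/ n <= K)%N by have := ltn_ord i; rewrite ltnS {1}iq leq_pmul2r.
have -> : (K * n - i = (K - i %/ n) * n)%N by rewrite mulnBl -iq.
by rewrite dvdn_mull // mulnK.
Qed.

End SubstXn.
Arguments fps_subst_Xn {R} n u.

Section GeneralizedBinomial.
Variable R : realType.
Implicit Types (c d s : R).

Lemma gbinom0 c : gbinom c 0 = 1.
Proof. by rewrite /gbinom big_ord0 fact0 divr1. Qed.

Lemma gbinomS c k : k.+1%:R * gbinom c k.+1 = (c - k%:R) * gbinom c k.
Proof.
rewrite /gbinom big_ord_recr /= factS natrM.
have kS_neq0 : k.+1%:R != 0 :> R by rewrite pnatr_eq0.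
have fact_neq0 : (k`!)%:R != 0 :> R by rewrite pnatr_eq0 -lt0n fact_gt0.
field; rewrite fact_neq0 /=.
by rewrite -natr1 addrC in kS_neq0.
Qed.

Lemma gbinom0S k : gbinom (0 : R) k.+1 = 0.
Proof. by rewrite /gbinom big_ord_recl /= subr0 !mul0r. Qed.

Lemma chu_vandermonde c d K :
  \sum_(l < K.+1) gbinom c l * gbinom d (K - l)%N = gbinom (c + d) K.
Proof.
elim: K => [|K IH]; first by rewrite big_ord1 !gbinom0 mulr1.
have KS_neq0 : K.+1%:R != 0 :> R by rewrite pnatr_eq0.
apply: (mulfI KS_neq0); rewrite gbinomS -IH mulr_sumr.
have split_weight (l : 'I_K.+2) :
    K.+1%:R * (gbinom c l * gbinom d (K.+1 - l)%N) =
    l%:R * gbinom c l * gbinom d (K.+1 - l)%N +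
    gbinom c l * ((K.+1 - l)%N%:R * gbinom d (K.+1 - l)%N).
  have le_lK : (l <= K.+1)%N by rewrite -ltnS ltn_ord.
  by rewrite -{1}(subnKC le_lK) natrD; ring.
rewrite (eq_bigr _ (fun l _ => split_weight l)) big_split /=.
rewrite big_ord_recl /= mul0r mul0r add0r.
rewrite [X in _ + X]big_ord_recr /= subnn mul0r mulr0 addr0.
rewrite mulr_sumr -big_split /=; apply: eq_bigr => l _.
have le_lK : (l <= K)%N by rewrite -ltnS ltn_ord.
rewrite /bump /= add1n gbinomS subSS subSn // gbinomS natrB //.
ring.
Qed.

Lemma fps_binom_pow_subst s n c : (0 < n)%N ->
  fps_binom_pow s n c = fps_subst_Xn n (fun l => gbinom c l * (- s) ^+ l).
Proof.
move=> n_gt0; apply/funext => k.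
by rewrite /fps_binom_pow /fps_subst_Xn (negbTE (lt0n_neq0 n_gt0)).
Qed.

Lemma fps_binom_pow_add s n c d : (0 < n)%N ->
  fps_mul (fps_binom_pow s n c) (fps_binom_pow s n d) = fps_binom_pow s n (c + d).
Proof.
move=> n_gt0; rewrite !fps_binom_pow_subst // fps_subst_Xn_mul //; congr fps_subst_Xn.
apply/funext => K; rewrite /fps_mul -chu_vandermonde mulr_suml.
apply: eq_bigr => l _; have le_lK : (l <= K)%N by rewrite -ltnS ltn_ord.
by rewrite -[in (- s) ^+ K](subnKC le_lK) exprD; ring.
Qed.

Lemma fps_binom_pow0 s n : (0 < n)%N -> fps_binom_pow s n 0 = @fps_one R.
Proof.
move=> n_gt0; apply/funext => k; rewrite fps_binom_pow_subst // /fps_subst_Xn /fps_one.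
case: k => [|k]; first by rewrite dvdn0 div0n gbinom0 expr0 mulr1.
case: ifP => // nk; have : (0 < k.+1 %/ n)%N by rewrite divn_gt0 // dvdn_leq.
by case: (k.+1 %/ n)%N => // q _; rewrite gbinom0S mul0r.
Qed.

Lemma fps_binom_pow_natmul s n c m : (0 < n)%N ->
  fps_pow (fps_binom_pow s n c) m = fps_binom_pow s n (m%:R * c).
Proof.
move=> n_gt0; elim: m => [|m IH]; first by rewrite mul0r fps_binom_pow0.
rewrite /fps_pow iterS -/(fps_pow _ m) IH fps_binom_pow_add // mulrSr.
by congr fps_binom_pow; ring.
Qed.

Lemma fps_binom_pow_inv s n c : (0 < n)%N ->
  fps_inv (fps_binom_pow s n c) = fps_binom_pow s n (- c).
Proof.
move=> n_gt0; apply: fps_inv_unique; last first.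
  by rewrite fps_binom_pow_add // subrr fps_binom_pow0.
by rewrite fps_binom_pow_subst // /fps_subst_Xn dvdn0 div0n gbinom0 expr0 mulr1 oner_eq0.
Qed.

(* Entries of T((1 - s x^n)^c | (1 - s x^n)^d): since
   x^j (1 - s x^n)^c / (1 - s x^n)^((j+1) d) = x^j (1 - s x^n)^(c - (j+1) d). *)
Lemma riordan_binom_pow s n c d i j : (0 < n)%N ->
  riordan (fps_binom_pow s n c) (fps_binom_pow s n d) i j =
  if (j <= i)%N && (n %| i - j)%N then
    gbinom (c - j.+1%:R * d) ((i - j) %/ n) * (- s) ^+ ((i - j) %/ n)
  else 0.
Proof.
move=> n_gt0; rewrite riordan_coef fps_binom_pow_natmul // fps_binom_pow_inv //.
by rewrite fps_binom_pow_add // fps_binom_pow_subst //; case: leqP.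
Qed.

End GeneralizedBinomial.

Lemma eqn_add_mul_divn (n i j : nat) :
  (i == j + n * ((i - j) %/ n))%N = (j <= i)%N && (n %| i - j)%N.
Proof.
apply/eqP/andP => [e | [le_ji n_dvd]].
  by split; rewrite e ?leq_addr // addKn dvdn_mulr.
by rewrite mulnC divnK // subnKC.
Qed.

Section LieAlgebraElement.
Variable R : realType.
Implicit Types (a b t : R).

Lemma Labn_Lmat a b n i j :
  Labn a b n i j = Lmat (fps_monom a n) (fps_monom b n) i j.
Proof.
rewrite /Labn /Lmat /fps_monom; case: leqP => ji.
  have -> : (i - j == n)%N = (i == j + n)%N by apply/eqP/eqP; lia.
  by case: ifP => _ //; rewrite mulr0 addr0.
by have -> : (i == j + n)%N = false by apply/negbTE/eqP; lia.
Qed.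

(* The nonzero entry (j + n k, j) of the k-th power of L^{a,b}_n:
   prod_{l < k} (a + (j + n l) b). *)
Definition Labn_pow_coef a b (n j k : nat) : R :=
  \prod_(l < k) (a + (j + n * l)%N%:R * b).

Lemma Labn_pow_coef_b0 a (n j k : nat) : Labn_pow_coef a 0 n j k = a ^+ k.
Proof.
rewrite /Labn_pow_coef (eq_bigr (fun=> a)) ?prodr_const ?card_ord //.
by move=> l _; rewrite mulr0 addr0.
Qed.

(* L^{a,b}_n maps e_j to (a + j b) e_{j+n}, so its k-th power maps e_j to
   Labn_pow_coef a b n j k e_{j+nk}; this survives truncation to any block. *)
Lemma Labn_block_pow a b n m k (i j : 'I_m.+1) :
  ((block m (Labn a b n)) ^+ k) i j =
  if (i : nat) == (j + n * k)%N then Labn_pow_coef a b n j k else 0.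
Proof.
elim: k i => [|k IH] i.
  rewrite expr0 mxE muln0 addn0 /Labn_pow_coef big_ord0.
  by case: (i =P j) => [->|ij]; [rewrite eqxx | case: eqP => // /val_inj].
rewrite exprS -mulmxE mxE (eq_bigr (fun l : 'I_m.+1 => Labn a b n i l *
    (if (l : nat) == (j + n * k)%N then Labn_pow_coef a b n j k else 0))); last first.
  by move=> l _; rewrite IH mxE.
rewrite (@sum_single _ _ (j + n * k)%N (fun l => Labn a b n i l *
    (if l == (j + n * k)%N then Labn_pow_coef a b n j k else 0))); last first.
  by move=> l /negbTE -> _; rewrite mulr0.
rewrite eqxx /= /Labn (_ : j + n * k.+1 = j + n * k + n)%N; last by rewrite mulnS; lia.
case: ifP => h; last first.
  by case: ifP => // /eqP e; move: h; have := ltn_ord i; rewrite e; lia.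
case: ifP => _; last by rewrite mul0r.
by rewrite /Labn_pow_coef big_ord_recr /= mulrC.
Qed.

End LieAlgebraElement.
Arguments Labn_pow_coef {R} a b n j k.

Section MatrixExponential.
Variable R : realType.

Lemma limn_eventually_const (N0 : nat) (u : nat -> R) (C : R) :
  (forall N : nat, (N0 <= N)%N -> u N = C) -> limn u = C.
Proof. by move=> uC; apply: (@lim_near_cst R) => //; exists N0 => // N /= /uC. Qed.

Lemma expmx_single_power m (A : 'M[R]_m.+1) (t : R) (i j : 'I_m.+1) (K : nat) :
  (forall k : nat, k != K -> (A ^+ k) i j = 0) ->
  expmx (t *: A) i j = t ^+ K * (A ^+ K) i j / (K`!)%:R.
Proof.
move=> A_single; rewrite mxE.
apply: (limn_eventually_const K.+1) => N lt_KN.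
rewrite (@sum_single _ _ K (fun k => ((t *: A) ^+ k) i j / (k`!)%:R)).
  by rewrite ifT // exprZn mxE.
by move=> k kK _; rewrite exprZn mxE A_single // mulr0 mul0r.
Qed.

(* For n > 0 the matrix L^{a,b}_n is nilpotent on each block, and only the
   power k = (i - j) / n contributes to the entry (i, j) of its exponential. *)
Lemma expmx_Labn (a b t : R) n m (i j : 'I_m.+1) : (0 < n)%N ->
  expmx (t *: block m (Labn a b n)) i j =
  if (j <= i)%N && (n %| i - j)%N then
    t ^+ ((i - j) %/ n) * Labn_pow_coef a b n j ((i - j) %/ n) / (((i - j) %/ n)`!)%:R
  else 0.
Proof.
move=> n_gt0; set K := ((i - j) %/ n)%N.
rewrite (@expmx_single_power _ _ _ _ _ K) => [|k kK]; rewrite Labn_block_pow.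
  by rewrite eqn_add_mul_divn; case: ifP => //; rewrite mulr0 mul0r.
case: eqP => // e.
by move: kK; rewrite /K e addKn mulKn // eqxx.
Qed.

(* For n = b = 0 the matrix is a times the identity, so its exponential is
   the scalar e^{a t}. *)
Lemma expmx_Labn_diag (a t : R) m (i j : 'I_m.+1) :
  expmx (t *: block m (Labn a 0 0)) i j = if (i : nat) == j then expR (a * t) else 0.
Proof.
have [/val_inj <- | ij] := eqVneq (i : nat) j; last first.
  rewrite (@expmx_single_power _ _ _ _ _ 0) => [|k _];
  by rewrite Labn_block_pow mul0n addn0 (negbTE ij) ?mulr0 ?mul0r.
rewrite mxE /expR; f_equal; f_equal; apply/funext => N.
rewrite /series /= big_mkord; apply: eq_bigr => k _.
by rewrite exprZn mxE Labn_block_pow mul0n addn0 eqxx Labn_pow_coef_b0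
  /exp_coeff /= exprMn (mulrC (a ^+ k)).
Qed.

(* The closed form of the entries in the case b != 0: with
   c = (b - a)/(n b) - (j + 1)/n, each factor t (a + (j + n l) b) equals
   (c - l)(-b n t), so the entry is binom(c, K) (-b n t)^K. *)
Lemma Labn_pow_coef_gbinom (a b t : R) (n j K : nat) : b != 0 -> (0 < n)%N ->
  t ^+ K * Labn_pow_coef a b n j K / (K`!)%:R =
  gbinom ((b - a) / (n%:R * b) - j.+1%:R * (1 / n%:R)) K * (- (b * n%:R * t)) ^+ K.
Proof.
move=> b_neq0 n_gt0; set c := _ - _.
have n_neq0 : n%:R != 0 :> R by rewrite pnatr_eq0 -lt0n.
have factor (l : nat) :
    t * (a + (j + n * l)%N%:R * b) = (c - l%:R) * (- (b * n%:R * t)).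
  by rewrite /c -natr1 !natrD natrM; field; rewrite n_neq0 b_neq0.
have pow_prod (x : R) : x ^+ K = \prod_(l < K) x by rewrite prodr_const card_ord.
rewrite /gbinom /Labn_pow_coef [RHS]mulrAC !pow_prod -!big_split /=.
by congr (_ / _); apply: eq_bigr => l _; rewrite factor.
Qed.

End MatrixExponential.

Theorem mainTheorem1 (R : realType) (a b : R) (n : nat) :
  (forall i j : nat, Labn a b n i j = Lmat (fps_monom a n) (fps_monom b n) i j) /\
  (b != 0 -> (0 < n)%N ->
     forall (t : R) (m : nat) (i j : 'I_m.+1),
       expmx (t *: block m (Labn a b n)) i j =
       riordan (fps_binom_pow (b * n%:R * t) n ((b - a) / (n%:R * b)))
               (fps_binom_pow (b * n%:R * t) n (1 / n%:R)) i j) /\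
  (b = 0 ->
     forall (t : R) (m : nat) (i j : 'I_m.+1),
       expmx (t *: block m (Labn a b n)) i j =
       riordan (fps_expXn (a * t) n) (@fps_one R) i j).
Proof.
split; first exact: Labn_Lmat.
split => [b_neq0 n_gt0 t m i j | -> t m i j].
  rewrite expmx_Labn // riordan_binom_pow //.
  by case: ifP => // _; rewrite Labn_pow_coef_gbinom.
rewrite riordan_one /fps_expXn.
have [-> | n_gt0] := posnP n.
  rewrite expmx_Labn_diag /= subn_eq0 eqn_leq.
  by case: (i <= j)%N; case: (j <= i)%N.
rewrite expmx_Labn // Labn_pow_coef_b0 exprMn (mulrC (a ^+ _)).
by case: (j <= i)%N.
Qed.
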